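(* Let $p,q\in E$, let $\mathsf{v}\in V$ be spacelike and let $\mathsf{w}\in V$ be future-pointing timelike with $\mathsf{w}\cdot\mathsf{v}\neq0$. Then $q+t\mathsf{w}\in\mathrm{int}\big(\mathcal{H}(\mathsf{v},p)\big)$ for all sufficiently large $t$ if and only if the point $[q+\mathbb{R}_+\mathsf{w}]\in\mathbb{H}^2$ lies in $\mathrm{int}\big(\mathcal{HS}(\mathsf{v})\big)$.
   Context: $V=\mathbb{R}^3$ with Lorentzian inner product $x\cdot y=x_1y_1+x_2y_2-x_3y_3$ and standard orientation; $E$ is the affine space with translation space $V$. Timelike: $x\cdot x<0$; null: $x\cdot x=0$; spacelike: $x\cdot x>0$; future-pointing: third coordinate positive. Points of $\mathbb{H}^2$ are identified with parallelism classes $[q+\mathbb{R}_+\mathsf{w}]$ of future-pointing timelike rays. For spacelike $\mathsf{v}$, $\mathcal{HS}(\mathsf{v})=\{[q+\mathbb{R}_+\mathsf{w}]\in\mathbb{H}^2:\mathsf{w}\cdot\mathsf{v}\ge0\}$ is a half-plane of $\mathbb{H}^2$. $\mathsf{v}^-,\mathsf{v}^+$ are the two future-pointing null vectors of Euclidean length $1$ in $\mathsf{v}^\perp$, labelled so that $(\mathsf{v}^-,\mathsf{v}^+,\mathsf{v})$ is positively oriented. The crooked half-space $\mathcal{H}(\mathsf{v},p)$ is the set of $q\in E$ with $(q-p)\cdot\mathsf{v}^+\le0$ if $(q-p)\cdot\mathsf{v}\ge0$, and $(q-p)\cdot\mathsf{v}^-\ge0$ if $(q-p)\cdot\mathsf{v}\le0$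 (both when $(q-p)\cdot\mathsf{v}=0$). *)

(* concrete reals R. V = R^3 as a record of coordinates;
   the affine space E is identified with R^3 (choice of origin). *)
From Stdlib Require Import Reals.
Open Scope R_scope.

Record vec := mkv { c1 : R; c2 : R; c3 : R }.

Definition vadd (x y : vec) : vec := mkv (c1 x + c1 y) (c2 x + c2 y) (c3 x + c3 y).
Definition vsub (x y : vec) : vec := mkv (c1 x - c1 y) (c2 x - c2 y) (c3 x - c3 y).
Definition vscale (t : R) (x : vec) : vec := mkv (t * c1 x) (t * c2 x) (t * c3 x).

Definition ldot (x y : vec) : R := c1 x * c1 y + c2 x * c2 y - c3 x * c3 y.

Definition enorm (x : vec) : R := sqrt (c1 x * c1 x + c2 x * c2 x + c3 x * c3 x).

Definition det3 (a b c : vec) : R :=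
  c1 a * (c2 b * c3 c - c3 b * c2 c)
  - c2 a * (c1 b * c3 c - c3 b * c1 c)
  + c3 a * (c1 b * c2 c - c2 b * c1 c).

Definition timelike (x : vec) : Prop := ldot x x < 0.
Definition null (x : vec) : Prop := ldot x x = 0.
Definition spacelike (x : vec) : Prop := ldot x x > 0.
Definition future (x : vec) : Prop := c3 x > 0.

(* (vm, vp) = (v^-, v^+): the two future-pointing null vectors of Euclidean
   length 1 in v^perp, labelled so that (v^-, v^+, v) is positively oriented. *)
Definition null_frame (v vm vp : vec) : Prop :=
  null vm /\ future vm /\ enorm vm = 1 /\ ldot vm v = 0 /\
  null vp /\ future vp /\ enorm vp = 1 /\ ldot vp v = 0 /\
  det3 vm vp v > 0.

Definition crooked_halfspace (v vm vp p : vec) (q : vec) : Prop :=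
  (ldot (vsub q p) v >= 0 -> ldot (vsub q p) vp <= 0) /\
  (ldot (vsub q p) v <= 0 -> ldot (vsub q p) vm >= 0).

Definition interiorE (S : vec -> Prop) (q : vec) : Prop :=
  exists eps, eps > 0 /\ forall x, enorm (vsub x q) < eps -> S x.

(* H^2 = parallelism classes of future timelike rays; the class
   [q + R_+ w] depends only on the direction w, so a subset of H^2 is
   represented by a predicate on future timelike vectors w that is
   invariant under positive scaling. *)
Definition HS (v : vec) (w : vec) : Prop := ldot w v >= 0.

(* interior in H^2 (quotient topology of the open future timelike cone
   by positive scaling): [w] is interior to the saturated set S iff some
   neighbourhood of w in the future timelike cone lies in S. *)
Definition interiorH2 (S : vec -> Prop) (w : vec) : Prop :=
  exists eps, eps > 0 /\
    forall w', timelike w' -> future w' -> enorm (vsub w' w) < eps -> S w'.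

(* The sign of [(q + t w - p) . a] is eventually that of [w . a].  If [w . v > 0]
   then for large [t] both [(y - p) . v > 0] and [(y - p) . v^+ < 0] hold
   ([w . v^+ < 0] because a future timelike and a future null vector always have
   negative product), and these open conditions force membership in the crooked
   half-space.  If [w . v < 0] then likewise [(y - p) . v < 0] and
   [(y - p) . v^- < 0], which excludes [y] from it.  On the [H^2] side, [w] lies in
   the interior of [HS(v)] exactly when [w . v > 0], since [w . v] is continuous
   in [w] and [w . v <> 0]. *)
From Stdlib Require Import Reals Lra Psatz.
Open Scope R_scope.

Definition eventually (P : R -> Prop) : Prop := exists T, forall t, t >= T -> P t.

Lemma eventually_impl (P Q : R -> Prop) :
  (forall t, P t -> Q t) -> eventually P -> eventually Q.
Proof. intros PQ [T HT]; exists T; auto. Qed.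

Lemma eventually_and (P Q : R -> Prop) :
  eventually P -> eventually Q -> eventually (fun t => P t /\ Q t).
Proof.
  intros [T1 H1] [T2 H2]; exists (Rmax T1 T2); intros t Ht.
  pose proof (Rmax_l T1 T2); pose proof (Rmax_r T1 T2).
  split; [apply H1 | apply H2]; lra.
Qed.

Lemma eventually_witness (P : R -> Prop) : eventually P -> exists t, P t.
Proof. intros [T HT]; exists T; apply HT; lra. Qed.

Lemma eventually_affine_pos (a b : R) : 0 < b -> eventually (fun t => 0 < a + t * b).
Proof.
  intros Hb; exists (1 - a / b); intros t Ht.
  assert (E : (1 - a / b) * b = b - a) by (field; lra).
  nra.
Qed.

Lemma ldot_vsub_ray (q w p a : vec) (t : R) :
  ldot (vsub (vadd q (vscale t w)) p) a = ldot (vsub q p) a + t * ldot w a.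
Proof. unfold ldot, vsub, vadd, vscale; simpl; ring. Qed.

Lemma eventually_ray_ldot_pos (q w p a : vec) : 0 < ldot w a ->
  eventually (fun t => 0 < ldot (vsub (vadd q (vscale t w)) p) a).
Proof.
  intros Hwa.
  apply (eventually_impl (fun t => 0 < ldot (vsub q p) a + t * ldot w a)).
  - intros t; rewrite ldot_vsub_ray; auto.
  - now apply eventually_affine_pos.
Qed.

Lemma eventually_ray_ldot_neg (q w p a : vec) : ldot w a < 0 ->
  eventually (fun t => ldot (vsub (vadd q (vscale t w)) p) a < 0).
Proof.
  intros Hwa.
  apply (eventually_impl (fun t => 0 < - ldot (vsub q p) a + t * - ldot w a)).
  - intros t; rewrite ldot_vsub_ray; lra.
  - apply eventually_affine_pos; lra.
Qed.

(* Cauchy-Schwarz in the spacelike plane: [(w1 n1 + w2 n2)^2 <= (w1^2 + w2^2) n3^2 < (w3 n3)^2]. *)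
Lemma ldot_future_timelike_null_neg (w n : vec) :
  timelike w -> future w -> null n -> future n -> ldot w n < 0.
Proof.
  unfold timelike, future, null, ldot; intros Hw Fw Hn Fn.
  set (s := c1 w * c1 n + c2 w * c2 n).
  assert (CS : s * s <= (c1 w * c1 w + c2 w * c2 w) * (c1 n * c1 n + c2 n * c2 n)).
  { pose proof (Rle_0_sqr (c1 w * c2 n - c2 w * c1 n)); unfold Rsqr in *; unfold s; nra. }
  assert (En : c1 n * c1 n + c2 n * c2 n = c3 n * c3 n) by lra.
  rewrite En in CS.
  assert (Hs : s * s < (c3 w * c3 n) * (c3 w * c3 n)).
  { assert (0 < c3 n * c3 n) by nra.
    assert (c1 w * c1 w + c2 w * c2 w < c3 w * c3 w) by lra.
    nra. }
  assert (0 < c3 w * c3 n) by nra.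
  fold s; nra.
Qed.

Definition l1norm (a : vec) : R := Rabs (c1 a) + Rabs (c2 a) + Rabs (c3 a).

Lemma Rabs_le_enorm (d : vec) (z : R) :
  z * z <= c1 d * c1 d + c2 d * c2 d + c3 d * c3 d -> Rabs z <= enorm d.
Proof.
  intros Hz; rewrite <- sqrt_Rsqr_abs; unfold Rsqr, enorm.
  now apply sqrt_le_1_alt.
Qed.

Lemma Rabs_ldot_le (d a : vec) : Rabs (ldot d a) <= enorm d * l1norm a.
Proof.
  assert (K : forall z y, z * z <= c1 d * c1 d + c2 d * c2 d + c3 d * c3 d ->
            Rabs (z * y) <= enorm d * Rabs y).
  { intros z y Hz; rewrite Rabs_mult.
    apply Rmult_le_compat_r; [apply Rabs_pos | now apply Rabs_le_enorm]. }
  pose proof (K (c1 d) (c1 a) ltac:(nra)); pose proof (K (c2 d) (c2 a) ltac:(nra)).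
  pose proof (K (c3 d) (c3 a) ltac:(nra)).
  pose proof (Rabs_triang (c1 d * c1 a + c2 d * c2 a) (- (c3 d * c3 a))).
  pose proof (Rabs_triang (c1 d * c1 a) (c2 d * c2 a)).
  rewrite Rabs_Ropp in *; unfold ldot, l1norm, Rminus; rewrite !Rmult_plus_distr_l; lra.
Qed.

Lemma ldot_pos_nbhd (y a : vec) : 0 < ldot y a ->
  exists eps, eps > 0 /\ forall x, enorm (vsub x y) < eps -> 0 < ldot x a.
Proof.
  intros Hya.
  assert (Ha : 0 <= l1norm a)
    by (unfold l1norm; pose proof (Rabs_pos (c1 a));
        pose proof (Rabs_pos (c2 a)); pose proof (Rabs_pos (c3 a)); lra).
  exists (ldot y a / (1 + l1norm a)); split.
  { apply Rdiv_lt_0_compat; lra. }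
  intros x Hx.
  assert (E : ldot x a = ldot y a + ldot (vsub x y) a)
    by (unfold ldot, vsub; simpl; ring).
  assert (Hx' : enorm (vsub x y) * (1 + l1norm a) < ldot y a).
  { apply (Rmult_lt_compat_r (1 + l1norm a)) in Hx; [|lra].
    now replace (ldot y a / (1 + l1norm a) * (1 + l1norm a)) with (ldot y a)
      in Hx by (field; lra). }
  pose proof (Rabs_ldot_le (vsub x y) a).
  pose proof (Rle_abs (- ldot (vsub x y) a)); rewrite Rabs_Ropp in *.
  pose proof (Rabs_pos (ldot (vsub x y) a)).
  assert (0 <= enorm (vsub x y)) by apply sqrt_pos.
  nra.
Qed.

Lemma vsub_vsubr (x y p : vec) : vsub (vsub x p) (vsub y p) = vsub x y.
Proof. unfold vsub; simpl; f_equal; ring. Qed.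

Lemma ldot_vsub_pos_nbhd (y p a : vec) : 0 < ldot (vsub y p) a ->
  exists eps, eps > 0 /\ forall x, enorm (vsub x y) < eps -> 0 < ldot (vsub x p) a.
Proof.
  intros Hya; destruct (ldot_pos_nbhd _ _ Hya) as [eps [He Heps]].
  exists eps; split; [exact He|]; intros x Hx.
  apply Heps; now rewrite vsub_vsubr.
Qed.

Lemma enorm_vsub_diag (y : vec) : enorm (vsub y y) = 0.
Proof.
  unfold enorm, vsub; simpl.
  replace (_ + _ + _) with 0 by ring; apply sqrt_0.
Qed.

Lemma interiorE_mem (S : vec -> Prop) (y : vec) : interiorE S y -> S y.
Proof. intros [eps [He HS]]; apply HS; rewrite enorm_vsub_diag; lra. Qed.

Lemma interiorH2_mem (S : vec -> Prop) (w : vec) :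
  timelike w -> future w -> interiorH2 S w -> S w.
Proof. intros Hw Fw [eps [He HS]]; apply HS; auto; rewrite enorm_vsub_diag; lra. Qed.

Lemma interiorH2_HS (v w : vec) : 0 < ldot w v -> interiorH2 (HS v) w.
Proof.
  intros Hwv; destruct (ldot_pos_nbhd _ _ Hwv) as [eps [He Heps]].
  exists eps; split; [exact He|]; intros w' _ _ Hw'.
  unfold HS; apply Rle_ge, Rlt_le, Heps, Hw'.
Qed.

Lemma ldot_vscale_r (x a : vec) (t : R) : ldot x (vscale t a) = t * ldot x a.
Proof. unfold ldot, vscale; simpl; ring. Qed.

Lemma crooked_halfspace_out (v vm vp p y : vec) :
  ldot (vsub y p) v < 0 -> ldot (vsub y p) vm < 0 ->
  ~ crooked_halfspace v vm vp p y.
Proof. intros Hv Hm [_ H]; specialize (H ltac:(lra)); lra. Qed.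

Lemma interiorE_crooked_halfspace (v vm vp p y : vec) :
  0 < ldot (vsub y p) v -> ldot (vsub y p) vp < 0 ->
  interiorE (crooked_halfspace v vm vp p) y.
Proof.
  intros Hv Hp.
  assert (Hp' : 0 < ldot (vsub y p) (vscale (-1) vp)) by (rewrite ldot_vscale_r; lra).
  destruct (ldot_vsub_pos_nbhd _ _ _ Hv) as [e1 [He1 H1]].
  destruct (ldot_vsub_pos_nbhd _ _ _ Hp') as [e2 [He2 H2]].
  exists (Rmin e1 e2); split; [now apply Rmin_glb_lt|].
  intros x Hx.
  pose proof (Rmin_l e1 e2); pose proof (Rmin_r e1 e2).
  assert (Xv : 0 < ldot (vsub x p) v) by (apply H1; lra).
  assert (Xp : 0 < ldot (vsub x p) (vscale (-1) vp)) by (apply H2; lra).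
  rewrite ldot_vscale_r in Xp.
  split; intros; lra.
Qed.

Theorem lemma3p1 (p q v w vm vp : vec) :
  spacelike v -> null_frame v vm vp ->
  timelike w -> future w -> ldot w v <> 0 ->
  ((exists T : R, forall t : R, t >= T ->
      interiorE (crooked_halfspace v vm vp p) (vadd q (vscale t w)))
   <-> interiorH2 (HS v) w).
Proof.
  intros _ [Nm [Fm [_ [_ [Np [Fp _]]]]]] Hw Fw Hwv.
  pose proof (ldot_future_timelike_null_neg w vm Hw Fw Nm Fm) as Hwm.
  pose proof (ldot_future_timelike_null_neg w vp Hw Fw Np Fp) as Hwp.
  split.
  - intros Hev; apply interiorH2_HS.
    destruct (Rtotal_order (ldot w v) 0) as [Hneg | [Hzero | Hpos]];
      [exfalso | contradiction | exact Hpos].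
    destruct (eventually_witness _ (eventually_and _ _ Hev
      (eventually_and _ _ (eventually_ray_ldot_neg q w p v Hneg)
                          (eventually_ray_ldot_neg q w p vm Hwm))))
      as [t [Hin [Hv Hm]]].
    exact (crooked_halfspace_out v vm vp p _ Hv Hm (interiorE_mem _ _ Hin)).
  - intros Hint.
    assert (Hpos : 0 < ldot w v)
      by (pose proof (interiorH2_mem _ _ Hw Fw Hint); unfold HS in *; lra).
    refine (eventually_impl _ _ _ (eventually_and _ _
      (eventually_ray_ldot_pos q w p v Hpos) (eventually_ray_ldot_neg q w p vp Hwp))).
    intros t [Hv Hp]; exact (interiorE_crooked_halfspace v vm vp p _ Hv Hp).
Qed.
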